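(* Let $\mathcal{R}^{rsc}$ be a rich single-crossing domain of classical preferences on $\mathbb{Z}$, ordered by $\prec$. Then $(\mathcal{R}^{rsc},\prec)$ is a linear continuum, i.e. $\prec$ is a simple (linear) order, every nonempty subset of $\mathcal{R}^{rsc}$ that is bounded above (w.r.t. $\prec$) has a least upper bound in $\mathcal{R}^{rsc}$, and whenever $R'\prec R''$ there is $R\in\mathcal{R}^{rsc}$ with $R'\prec R\prec R''$. Moreover there is an order-preserving homeomorphism $h$ between $\mathcal{R}^{rsc}$ with the order topology and an open interval of $\mathbb{R}$ (hence $\mathbb{R}$) with the Euclidean topology; in particular the order topology on $\mathcal{R}^{rsc}$ is metrizable.
   Context: Let $\mathbb{Z}=[0,\infty)\times[0,1]$, with elements $(t,q)$ ($t$ a payment, $q$ a share or winning probability). For $x'=(t',q'),x''=(t'',q'')$ write $x'<x''$ if $t'<t''$ and $q'<q''$, and $x'\le x''$ if $x'=x''$ or $x'<x''$. A preference is a complete transitive binary relation $R$ on $\mathbb{Z}$ with strict part $P$ and indifference $I$ (decorations on $R$ carry over to $P,I$). Let $UC(R,z)=\{x:xRz\}$, $LC(R,z)=\{x:zRx\}$, $IC(R,z)=\{x:xIz\}$. $R$ is classical if: for all $q$, $t''>t'$ implies $(t',q)P(t'',q)$; for all $t$, $q''>q'$ implies $(t,q'')P(t,q')$; and $UC(R,z),LC(R,z)$ are closed in $\mathbb{Z}$ for every $z$. Two distinct classical preferences $R',R''$ satisfy the single-crossing property if for all $x,y\in\mathbb{Z}$ the set $IC(R',x)\cap IC(R'',y)$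 has at most one element. A rich single-crossing domain $\mathcal{R}^{rsc}$ is a set of classical preferences any two distinct members of which satisfy the single-crossing property, and such that for all $x'<x''$ there is $R\in\mathcal{R}^{rsc}$ with $x'Ix''$. For $z\in\mathbb{Z}$ let $\square(z)=\{x\in\mathbb{Z}:x\le z\}$; $R''$ cuts $R'$ from above at $z$ if $\square(z)\cap UC(R'',z)\subseteq\square(z)\cap UC(R',z)$. It is a known fact that for distinct $R',R''\in\mathcal{R}^{rsc}$, if $R''$ cuts $R'$ from above at some bundle $(t,q)$ with $t>0,q>0$, then it does so at every bundle. For distinct $R',R''\in\mathcal{R}^{rsc}$ write $R'\prec R''$ if $R''$ cuts $R'$ from above at every $z\in\mathbb{Z}$. The order topology on $\mathcal{R}^{rsc}$ is generated by the open intervals $]R',R''[=\{R:R'\prec R\prec R''\}$ together with the open rays. *)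

From Stdlib Require Import Reals.
From Coquelicot Require Import Rbar.
Open Scope R_scope.

Definition inZ (z : R * R) : Prop := 0 <= fst z /\ 0 <= snd z <= 1.
Definition Zt : Type := { z : R * R | inZ z }.
Definition pay (x : Zt) : R := fst (proj1_sig x).
Definition shr (x : Zt) : R := snd (proj1_sig x).

Definition zlt (x y : Zt) : Prop := pay x < pay y /\ shr x < shr y.
Definition zle (x y : Zt) : Prop := x = y \/ zlt x y.

Definition Pref : Type := Zt -> Zt -> Prop.
Definition strictP (Rl : Pref) (x y : Zt) : Prop := Rl x y /\ ~ Rl y x.
Definition indiff (Rl : Pref) (x y : Zt) : Prop := Rl x y /\ Rl y x.

Definition is_preference (Rl : Pref) : Prop :=
  (forall x y, Rl x y \/ Rl y x) /\
  (forall x y z, Rl x y -> Rl y z -> Rl x z).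

Definition zdist (x y : Zt) : R :=
  sqrt ((pay x - pay y) ^ 2 + (shr x - shr y) ^ 2).
Definition closedZ (A : Zt -> Prop) : Prop :=
  forall z, (forall eps, 0 < eps -> exists x, A x /\ zdist z x < eps) -> A z.

Definition UC (Rl : Pref) (z : Zt) : Zt -> Prop := fun x => Rl x z.
Definition LC (Rl : Pref) (z : Zt) : Zt -> Prop := fun x => Rl z x.
Definition IC (Rl : Pref) (z : Zt) : Zt -> Prop := fun x => indiff Rl x z.

Definition classical (Rl : Pref) : Prop :=
  is_preference Rl /\
  (forall x y : Zt, shr x = shr y -> pay x < pay y -> strictP Rl x y) /\
  (forall x y : Zt, pay x = pay y -> shr x < shr y -> strictP Rl y x) /\
  (forall z, closedZ (UC Rl z) /\ closedZ (LC Rl z)).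

Definition single_crossing (R1 R2 : Pref) : Prop :=
  forall x y a b : Zt, IC R1 x a -> IC R2 y a -> IC R1 x b -> IC R2 y b -> a = b.

Definition Domain : Type := Pref -> Prop.

Definition rich_single_crossing (D : Domain) : Prop :=
  (forall Rl, D Rl -> classical Rl) /\
  (forall R1 R2, D R1 -> D R2 -> R1 <> R2 -> single_crossing R1 R2) /\
  (forall x1 x2 : Zt, zlt x1 x2 -> exists Rl, D Rl /\ indiff Rl x1 x2).

Definition cuts_from_above (R2 R1 : Pref) (z : Zt) : Prop :=
  forall x, zle x z -> UC R2 z x -> UC R1 z x.

Definition prec (R1 R2 : Pref) : Prop :=
  R1 <> R2 /\ forall z, cuts_from_above R2 R1 z.
Definition preceq (R1 R2 : Pref) : Prop := R1 = R2 \/ prec R1 R2.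

Definition simple_order (D : Domain) : Prop :=
  (forall Rl, D Rl -> ~ prec Rl Rl) /\
  (forall R1 R2 R3, D R1 -> D R2 -> D R3 -> prec R1 R2 -> prec R2 R3 -> prec R1 R3) /\
  (forall R1 R2, D R1 -> D R2 -> R1 <> R2 -> prec R1 R2 \/ prec R2 R1).

Definition upper_bound (D S : Domain) (u : Pref) : Prop :=
  D u /\ forall s, S s -> preceq s u.

Definition lub_property (D : Domain) : Prop :=
  forall S : Domain, (forall s, S s -> D s) -> (exists s, S s) ->
    (exists u, upper_bound D S u) ->
    exists l, upper_bound D S l /\ forall u, upper_bound D S u -> preceq l u.

Definition dense_order (D : Domain) : Prop :=
  forall R1 R2, D R1 -> D R2 -> prec R1 R2 -> exists Rl, D Rl /\ prec R1 Rl /\ prec Rl R2.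

Definition linear_continuum (D : Domain) : Prop :=
  simple_order D /\ lub_property D /\ dense_order D.

Definition basic_open (D : Domain) (B : Domain) : Prop :=
  (B = D) \/
  (exists a b, D a /\ D b /\ B = (fun Rl => D Rl /\ prec a Rl /\ prec Rl b)) \/
  (exists a, D a /\ B = (fun Rl => D Rl /\ prec a Rl)) \/
  (exists b, D b /\ B = (fun Rl => D Rl /\ prec Rl b)).

Definition order_open (D : Domain) (U : Domain) : Prop :=
  (forall Rl, U Rl -> D Rl) /\
  forall Rl, U Rl -> exists B, basic_open D B /\ B Rl /\ forall Q, B Q -> U Q.

Definition in_interval (a b : Rbar) (y : R) : Prop := Rbar_lt a y /\ Rbar_lt y b.

Definition euclid_open_in (a b : Rbar) (V : R -> Prop) : Prop :=
  (forall y, V y -> in_interval a b y) /\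
  forall y, V y -> exists eps, 0 < eps /\
     forall y', in_interval a b y' -> Rabs (y' - y) < eps -> V y'.

Definition order_homeomorphism (D : Domain) (h : Pref -> R) (a b : Rbar) : Prop :=
  (forall Rl, D Rl -> in_interval a b (h Rl)) /\
  (forall R1 R2, D R1 -> D R2 -> h R1 = h R2 -> R1 = R2) /\
  (forall y, in_interval a b y -> exists Rl, D Rl /\ h Rl = y) /\
  (forall R1 R2, D R1 -> D R2 -> prec R1 R2 -> h R1 < h R2) /\
  (forall V, euclid_open_in a b V -> order_open D (fun Rl => D Rl /\ V (h Rl))) /\
  (forall U, order_open D U -> euclid_open_in a b (fun y => exists Rl, U Rl /\ h Rl = y)).

Definition is_metric_on (D : Domain) (d : Pref -> Pref -> R) : Prop :=
  (forall x y, D x -> D y -> 0 <= d x y) /\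
  (forall x y, D x -> D y -> (d x y = 0 <-> x = y)) /\
  (forall x y, D x -> D y -> d x y = d y x) /\
  (forall x y z, D x -> D y -> D z -> d x z <= d x y + d y z).

Definition metric_open (D : Domain) (d : Pref -> Pref -> R) (U : Domain) : Prop :=
  (forall Rl, U Rl -> D Rl) /\
  forall Rl, U Rl -> exists eps, 0 < eps /\ forall Q, D Q -> d Rl Q < eps -> U Q.

Definition order_topology_metrizable (D : Domain) : Prop :=
  exists d, is_metric_on D d /\ forall U, order_open D U <-> metric_open D d U.

From Stdlib Require Import Reals Lra ClassicalEpsilon ProofIrrelevance Classical.
From Coquelicot Require Import Rbar.
Open Scope R_scope.

(* Take a box with upper corner z and the staircase running from its lower-right corner
   through its lower-left corner to its upper-left corner. A classical preference strictly
   improves along the staircase, and by closedness of its contour sets it is indifferent to z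
   at exactly one point, its threshold. Comparing thresholds says which of two preferences
   cuts the other from above along that staircase; the two alternatives exclude each other by
   single crossing and are closed under moving the box, so by connectedness of a segment of
   boxes the answer is the same for every box. Every x < z lies on the staircase of the box
   spanned by x and z, so R' precedes R'' exactly when R' has the smaller threshold on one fixed
   reference box. This rank is injective by single crossing and maps the domain onto ]-1,1[ by
   richness, hence it is an order isomorphism onto an open interval, which transports density,
   the least upper bound property, the order topology and a metric. *)

Lemma inZ_origin : inZ (0, 0).
Proof. unfold inZ; simpl; lra. Qed.

(* Outside Z the bundle defaults to the origin. *)
Definition bundle (t q : R) : Zt :=
  match excluded_middle_informative (inZ (t, q)) with
  | left H => exist _ (t, q) H
  | right _ => exist _ (0, 0) inZ_origin
  end.

Lemma pay_bundle t q : 0 <= t -> 0 <= q <= 1 -> pay (bundle t q) = t.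
Proof.
  intros Ht Hq; unfold bundle.
  destruct excluded_middle_informative as [H | H]; [reflexivity |].
  exfalso; apply H; unfold inZ; simpl; lra.
Qed.

Lemma shr_bundle t q : 0 <= t -> 0 <= q <= 1 -> shr (bundle t q) = q.
Proof.
  intros Ht Hq; unfold bundle.
  destruct excluded_middle_informative as [H | H]; [reflexivity |].
  exfalso; apply H; unfold inZ; simpl; lra.
Qed.

Lemma Zt_ext (a b : Zt) : pay a = pay b -> shr a = shr b -> a = b.
Proof.
  destruct a as [[ta qa] Ha], b as [[tb qb] Hb]; unfold pay, shr; simpl.
  intros -> ->; f_equal; apply proof_irrelevance.
Qed.

Lemma Zt_bounds (a : Zt) : 0 <= pay a /\ 0 <= shr a <= 1.
Proof. destruct a as [[t q] H]; exact H. Qed.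

Definition near (a b : Zt) (e : R) : Prop :=
  Rabs (pay a - pay b) < e /\ Rabs (shr a - shr b) < e.

Lemma near_sym a b e : near a b e -> near b a e.
Proof. unfold near; rewrite !(Rabs_minus_sym (pay b)), !(Rabs_minus_sym (shr b)); auto. Qed.

Lemma near_refl a e : 0 < e -> near a a e.
Proof. intros He; unfold near; rewrite !Rminus_diag, Rabs_R0; lra. Qed.

Lemma near_le a b e e' : near a b e -> e <= e' -> near a b e'.
Proof. intros [H1 H2] He; split; lra. Qed.

Lemma near_zdist x y e : 0 < e -> near x y (e / 2) -> zdist x y < e.
Proof.
  intros He [Hp Hs]; unfold zdist.
  rewrite <- (sqrt_pow2 e) by lra; apply sqrt_lt_1_alt.
  rewrite <- (pow2_abs (pay x - pay y)), <- (pow2_abs (shr x - shr y)).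
  pose proof (Rabs_pos (pay x - pay y)); pose proof (Rabs_pos (shr x - shr y)).
  split; nra.
Qed.

Lemma closedZ_compl_near (A : Zt -> Prop) z : closedZ A -> ~ A z ->
  exists e, 0 < e /\ forall x, near x z e -> ~ A x.
Proof.
  intros HA Hz; apply NNPP; intros Hn; apply Hz, HA; intros eps Heps.
  apply NNPP; intros Hm; apply Hn; exists (eps / 2); split; [lra |].
  intros x Hx Ax; apply Hm; exists x; split; [exact Ax |].
  apply near_zdist; [lra |]; apply near_sym, (near_le _ _ _ _ Hx); lra.
Qed.

Section Classical.
Variable Rl : Pref.
Hypothesis HR : classical Rl.

Lemma pref_refl x : Rl x x.
Proof. destruct HR as [[Htot _] _]; destruct (Htot x x); auto. Qed.

Lemma pref_not x y : ~ Rl x y -> Rl y x.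
Proof. destruct HR as [[Htot _] _]; destruct (Htot x y); tauto. Qed.

Lemma pref_trans x y z : Rl x y -> Rl y z -> Rl x z.
Proof. destruct HR as [[_ Htr] _]; eauto. Qed.

Lemma strict_trans x y z : strictP Rl x y -> strictP Rl y z -> strictP Rl x z.
Proof.
  intros [Hxy Nyx] [Hyz Nzy]; split; [eapply pref_trans; eauto |].
  intros Hzx; apply Nzy; eapply pref_trans; eauto.
Qed.

Lemma strict_weak_trans x y z : strictP Rl x y -> Rl y z -> strictP Rl x z.
Proof.
  intros [Hxy Nyx] Hyz; split; [eapply pref_trans; eauto |].
  intros Hzx; apply Nyx; eapply pref_trans; eauto.
Qed.

Lemma strict_less_pay x y : shr x = shr y -> pay x < pay y -> strictP Rl x y.
Proof. destruct HR as [_ [H _]]; auto. Qed.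

Lemma strict_more_shr x y : pay x = pay y -> shr x < shr y -> strictP Rl y x.
Proof. destruct HR as [_ [_ [H _]]]; auto. Qed.

Lemma UC_closed z : closedZ (UC Rl z).
Proof. destruct HR as [_ [_ [_ H]]]; apply H. Qed.

Lemma LC_closed z : closedZ (LC Rl z).
Proof. destruct HR as [_ [_ [_ H]]]; apply H. Qed.

Lemma not_pref_near x y : ~ Rl x y -> exists e, 0 < e /\
  forall x', near x' x e -> ~ Rl x' y.
Proof. exact (closedZ_compl_near (UC Rl y) x (UC_closed y)). Qed.

Lemma not_pref_near_r x y : ~ Rl x y -> exists e, 0 < e /\
  forall y', near y' y e -> ~ Rl x y'.
Proof. exact (closedZ_compl_near (LC Rl x) y (LC_closed x)). Qed.

(* Insert w = a with a little more payment, so that a > w > b; a strict comparison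
   with the fixed bundle w persists near a (resp. near b) by closedness of UC and LC. *)
Lemma strict_near a b : strictP Rl a b ->
  exists e, 0 < e /\ forall a' b', near a' a e -> near b' b e -> strictP Rl a' b'.
Proof.
  intros [Hab Nba].
  destruct (not_pref_near_r _ _ Nba) as [e1 [He1 Hb]].
  destruct (Zt_bounds a) as [Ha1 Ha2].
  set (w := bundle (pay a + e1 / 2) (shr a)).
  assert (Pw : pay w = pay a + e1 / 2) by (apply pay_bundle; lra).
  assert (Sw : shr w = shr a) by (apply shr_bundle; lra).
  assert (Haw : strictP Rl a w) by (apply strict_less_pay; lra).
  assert (Hwb : strictP Rl w b).
  { assert (Nbw : ~ Rl b w).
    { apply Hb; unfold near; rewrite Pw, Sw.
      replace (pay a + e1 / 2 - pay a) with (e1 / 2) by ring.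
      rewrite Rminus_diag, Rabs_R0, Rabs_pos_eq by lra; split; lra. }
    split; [apply pref_not |]; exact Nbw. }
  destruct (not_pref_near_r _ _ (proj2 Haw)) as [e2 [He2 Ha]].
  destruct (not_pref_near _ _ (proj2 Hwb)) as [e3 [He3 Hb']].
  exists (Rmin e2 e3); split; [apply Rmin_glb_lt; auto |].
  intros a' b' Ha' Hb''.
  pose proof (Rmin_l e2 e3); pose proof (Rmin_r e2 e3).
  apply strict_trans with w; split; [apply pref_not | | apply pref_not |];
    first [apply Ha | apply Hb']; eapply near_le; eauto.
Qed.

End Classical.

Record box := Box { top_pay : R; top_shr : R; low_pay : R; low_shr : R }.

Definition box_ok (b : box) : Prop :=
  0 <= low_pay b < top_pay b /\ 0 <= low_shr b < top_shr b /\ top_shr b <= 1.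

(* The staircase of a box: for s in [-1,0] it runs left along the bottom edge from
   (top_pay, low_shr) to the lower corner, for s in [0,1] up the left edge to (low_pay, top_shr). *)
Definition stair_pay (b : box) (s : R) : R := low_pay b + Rmax 0 (- s) * (top_pay b - low_pay b).
Definition stair_shr (b : box) (s : R) : R := low_shr b + Rmax 0 s * (top_shr b - low_shr b).
Definition stair (b : box) (s : R) : Zt := bundle (stair_pay b s) (stair_shr b s).
Definition top (b : box) : Zt := bundle (top_pay b) (top_shr b).

Lemma Rmax0_cases s :
  (0 <= s /\ Rmax 0 (- s) = 0 /\ Rmax 0 s = s) \/ (s <= 0 /\ Rmax 0 (- s) = - s /\ Rmax 0 s = 0).
Proof.
  destruct (Rle_dec 0 s).
  - left; rewrite Rmax_left, Rmax_right by lra; auto.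
  - right; rewrite Rmax_right, Rmax_left by lra; split; [lra | auto].
Qed.

Lemma Rmax0_lipschitz a b : Rabs (Rmax 0 a - Rmax 0 b) <= Rabs (a - b).
Proof. unfold Rmax; destruct Rle_dec, Rle_dec; unfold Rabs; repeat destruct Rcase_abs; lra. Qed.

Section Staircase.
Variable b : box.
Hypothesis Hb : box_ok b.

Lemma stair_pay_bounds s : -1 <= s <= 1 -> low_pay b <= stair_pay b s <= top_pay b.
Proof. destruct Hb; unfold stair_pay; destruct (Rmax0_cases s) as [[? [-> _]] | [? [-> _]]]; nra. Qed.

Lemma stair_shr_bounds s : -1 <= s <= 1 -> low_shr b <= stair_shr b s <= top_shr b.
Proof. destruct Hb; unfold stair_shr; destruct (Rmax0_cases s) as [[? [_ ->]] | [? [_ ->]]]; nra. Qed.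

Lemma pay_stair s : -1 <= s <= 1 -> pay (stair b s) = stair_pay b s.
Proof.
  intros Hs; pose proof (stair_pay_bounds s Hs); pose proof (stair_shr_bounds s Hs).
  destruct Hb; apply pay_bundle; lra.
Qed.

Lemma shr_stair s : -1 <= s <= 1 -> shr (stair b s) = stair_shr b s.
Proof.
  intros Hs; pose proof (stair_pay_bounds s Hs); pose proof (stair_shr_bounds s Hs).
  destruct Hb; apply shr_bundle; lra.
Qed.

Lemma pay_top : pay (top b) = top_pay b.
Proof. destruct Hb; apply pay_bundle; lra. Qed.

Lemma shr_top : shr (top b) = top_shr b.
Proof. destruct Hb; apply shr_bundle; lra. Qed.

Lemma stair_below_top s : -1 < s < 1 -> zlt (stair b s) (top b).
Proof.
  intros Hs; unfold zlt; rewrite pay_stair, shr_stair, pay_top, shr_top by lra.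
  destruct Hb; unfold stair_pay, stair_shr.
  destruct (Rmax0_cases s) as [[? [-> ->]] | [? [-> ->]]]; split; nra.
Qed.

Lemma stair_neq_top s : -1 < s < 1 -> stair b s <> top b.
Proof. intros Hs E; destruct (stair_below_top s Hs) as [H _]; rewrite E in H; lra. Qed.

Definition stair_modulus : R := 1 + top_pay b + top_shr b.

Lemma stair_modulus_pos : 0 < stair_modulus.
Proof. unfold stair_modulus; destruct Hb; lra. Qed.

Lemma stair_near s s' d : -1 <= s <= 1 -> -1 <= s' <= 1 -> Rabs (s' - s) < d ->
  near (stair b s') (stair b s) (d * stair_modulus).
Proof.
  intros Hs Hs' Hd; unfold near, stair_modulus.
  rewrite !pay_stair, !shr_stair by lra; unfold stair_pay, stair_shr.
  pose proof (Rmax0_lipschitz (- s') (- s)); pose proof (Rmax0_lipschitz s' s).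
  replace (- s' - - s) with (- (s' - s)) in * by ring; rewrite Rabs_Ropp in *.
  replace (low_pay b + Rmax 0 (- s') * (top_pay b - low_pay b)
           - (low_pay b + Rmax 0 (- s) * (top_pay b - low_pay b)))
    with ((Rmax 0 (- s') - Rmax 0 (- s)) * (top_pay b - low_pay b)) by ring.
  replace (low_shr b + Rmax 0 s' * (top_shr b - low_shr b)
           - (low_shr b + Rmax 0 s * (top_shr b - low_shr b)))
    with ((Rmax 0 s' - Rmax 0 s) * (top_shr b - low_shr b)) by ring.
  destruct Hb as [[? ?] [[? ?] ?]].
  rewrite !Rabs_mult, (Rabs_pos_eq (top_pay b - low_pay b)), (Rabs_pos_eq (top_shr b - low_shr b))
    by lra.
  pose proof (Rabs_pos (Rmax 0 (- s') - Rmax 0 (- s))); pose proof (Rabs_pos (Rmax 0 s' - Rmax 0 s)).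
  split; nra.
Qed.

Lemma closedZ_stair (A : Zt -> Prop) m : closedZ A -> -1 <= m <= 1 ->
  (forall d, 0 < d -> exists s, -1 <= s <= 1 /\ Rabs (m - s) < d /\ A (stair b s)) ->
  A (stair b m).
Proof.
  intros HA Hm Happ; apply HA; intros eps Heps.
  pose proof stair_modulus_pos as HK.
  destruct (Happ (eps / (2 * stair_modulus))) as [s [Hs [Hms As]]].
  { apply Rdiv_lt_0_compat; lra. }
  exists (stair b s); split; [exact As |].
  apply near_zdist; [lra |].
  replace (eps / 2) with (eps / (2 * stair_modulus) * stair_modulus) by (field; lra).
  apply stair_near; lra.
Qed.

Variable Rl : Pref.
Hypothesis HR : classical Rl.

Lemma stair_strict_mono s s' : -1 <= s -> s < s' -> s' <= 1 -> strictP Rl (stair b s') (stair b s).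
Proof.
  intros H1 H2 H3; destruct Hb as [[h1 h2] [[h3 h4] h5]].
  assert (Hleft : forall u v, -1 <= u -> u < v -> v <= 0 -> strictP Rl (stair b v) (stair b u)).
  { intros u v ? ? ?; apply (strict_less_pay Rl HR);
      rewrite ?pay_stair, ?shr_stair by lra; unfold stair_pay, stair_shr;
      rewrite ?(Rmax_left 0 u), ?(Rmax_left 0 v), ?(Rmax_right 0 (- u)), ?(Rmax_right 0 (- v)) by lra;
      nra. }
  assert (Hup : forall u v, 0 <= u -> u < v -> v <= 1 -> strictP Rl (stair b v) (stair b u)).
  { intros u v ? ? ?; apply (strict_more_shr Rl HR);
      rewrite ?pay_stair, ?shr_stair by lra; unfold stair_pay, stair_shr;
      rewrite ?(Rmax_right 0 u), ?(Rmax_right 0 v), ?(Rmax_left 0 (- u)), ?(Rmax_left 0 (- v)) by lra;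
      nra. }
  destruct (Rle_dec s' 0); [apply Hleft; lra |].
  destruct (Rle_dec 0 s); [apply Hup; lra |].
  apply (strict_trans Rl HR) with (stair b 0); [apply Hup | apply Hleft]; lra.
Qed.

Lemma top_strict_stair_start : strictP Rl (top b) (stair b (-1)).
Proof.
  destruct Hb as [[h1 h2] [[h3 h4] h5]]; apply (strict_more_shr Rl HR);
    rewrite ?pay_stair, ?shr_stair, ?pay_top, ?shr_top by lra; unfold stair_pay, stair_shr;
    unfold Rmax; repeat destruct Rle_dec; lra.
Qed.

Lemma stair_end_strict_top : strictP Rl (stair b 1) (top b).
Proof.
  destruct Hb as [[h1 h2] [[h3 h4] h5]]; apply (strict_less_pay Rl HR);
    rewrite ?pay_stair, ?shr_stair, ?pay_top, ?shr_top by lra; unfold stair_pay, stair_shr;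
    unfold Rmax; repeat destruct Rle_dec; lra.
Qed.

End Staircase.

Lemma is_lub_approx (E : R -> Prop) m : is_lub E m ->
  forall d, 0 < d -> exists s, E s /\ m - d < s <= m.
Proof.
  intros [Hub Hleast] d Hd; apply NNPP; intros N.
  assert (m <= m - d); [| lra].
  apply Hleast; intros x Ex; apply Rnot_lt_le; intros Hx.
  apply N; exists x; split; [exact Ex | split; [lra | apply Hub, Ex]].
Qed.

Section Threshold.
Variable b : box.
Hypothesis Hb : box_ok b.
Variable Rl : Pref.
Hypothesis HR : classical Rl.

(* The threshold is the supremum of the staircase parameters that are weakly worse than the top;
   closedness of LC and UC makes the staircase indifferent to the top there. *)
Lemma threshold_exists : exists s, -1 < s < 1 /\ indiff Rl (stair b s) (top b).
Proof.
  pose proof (top_strict_stair_start b Hb Rl HR) as [Hstart Nstart].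
  pose proof (stair_end_strict_top b Hb Rl HR) as [Hend Nend].
  set (E := fun s => -1 <= s <= 1 /\ Rl (top b) (stair b s)).
  assert (HE1 : E (-1)) by (split; [lra | exact Hstart]).
  destruct (completeness E) as [m Hm].
  { exists 1; intros x [Hx _]; lra. }
  { exists (-1); exact HE1. }
  assert (Hm1 : -1 <= m) by (apply (proj1 Hm), HE1).
  assert (Hm2 : m <= 1) by (apply (proj2 Hm); intros x [Hx _]; lra).
  assert (Hworse : Rl (top b) (stair b m)).
  { apply (closedZ_stair b Hb (LC Rl (top b))); [apply LC_closed, HR | lra |].
    intros d Hd; destruct (is_lub_approx E m Hm d Hd) as [s [[Hs Es] Hms]].
    exists s; split; [exact Hs |]; split; [rewrite Rabs_pos_eq; lra | exact Es]. }
  assert (Hbetter : Rl (stair b m) (top b)).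
  { destruct (Req_dec m 1) as [-> | Hne]; [exact Hend |].
    apply (closedZ_stair b Hb (UC Rl (top b))); [apply UC_closed, HR | lra |].
    intros d Hd; set (s := m + Rmin d (1 - m) / 2).
    assert (0 < Rmin d (1 - m) <= d) by (split; [apply Rmin_glb_lt | apply Rmin_l]; lra).
    assert (Rmin d (1 - m) <= 1 - m) by apply Rmin_r.
    exists s; unfold s; split; [lra | split].
    - rewrite Rabs_minus_sym, Rabs_pos_eq; lra.
    - apply (pref_not Rl HR); intros Hs.
      assert (m + Rmin d (1 - m) / 2 <= m); [apply (proj1 Hm); split; [lra | exact Hs] | lra]. }
  exists m; split; [split | split; assumption].
  - destruct (Req_dec m (-1)) as [Em | ]; [| lra].
    rewrite Em in Hbetter; contradiction.
  - destruct (Req_dec m 1) as [Em | ]; [| lra].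
    rewrite Em in Hworse; contradiction.
Qed.

Lemma threshold_spec s0 : -1 < s0 < 1 -> indiff Rl (stair b s0) (top b) ->
  forall s, -1 <= s <= 1 -> (Rl (stair b s) (top b) <-> s0 <= s).
Proof.
  intros Hs0 [I1 I2] s Hs; split.
  - intros Hr; apply Rnot_lt_le; intros Hlt.
    destruct (stair_strict_mono b Hb Rl HR s s0) as [_ N]; try lra.
    apply N; apply (pref_trans Rl HR _ (top b)); assumption.
  - intros Hle; destruct (Req_dec s s0) as [-> | Hne]; [exact I1 |].
    apply (strict_weak_trans Rl HR _ (stair b s0)); [| exact I1].
    apply (stair_strict_mono b Hb Rl HR); lra.
Qed.

Lemma threshold_unique s0 s1 : -1 < s0 < 1 -> -1 < s1 < 1 ->
  indiff Rl (stair b s0) (top b) -> indiff Rl (stair b s1) (top b) -> s0 = s1.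
Proof.
  intros H0 H1 I0 I1.
  pose proof (proj1 (threshold_spec s0 H0 I0 s1 ltac:(lra)) (proj1 I1)).
  pose proof (proj1 (threshold_spec s1 H1 I1 s0 ltac:(lra)) (proj1 I0)).
  lra.
Qed.

End Threshold.

Definition stair_cut (R2 R1 : Pref) (b : box) : Prop :=
  forall s, -1 < s < 1 -> R2 (stair b s) (top b) -> R1 (stair b s) (top b).

Lemma single_crossing_indiff A B x z : classical A -> classical B -> single_crossing A B ->
  indiff A x z -> indiff B x z -> x = z.
Proof.
  intros HA HB Hsc IA IB; apply (Hsc z z x z); auto;
    split; apply pref_refl; assumption.
Qed.

Section StairCut.
Variables A B : Pref.
Hypothesis HA : classical A.
Hypothesis HB : classical B.
Variable b : box.
Hypothesis Hb : box_ok b.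

Lemma stair_cut_total : stair_cut A B b \/ stair_cut B A b.
Proof.
  destruct (threshold_exists b Hb A HA) as [sa [Ha Ia]].
  destruct (threshold_exists b Hb B HB) as [sb [Hb' Ib]].
  pose proof (threshold_spec b Hb A HA sa Ha Ia) as SA.
  pose proof (threshold_spec b Hb B HB sb Hb' Ib) as SB.
  destruct (Rle_dec sa sb); [right | left]; intros s Hs Hr.
  - apply SA; [lra |]; apply SB in Hr; lra.
  - apply SB; [lra |]; apply SA in Hr; lra.
Qed.

Lemma stair_cut_exclusive : single_crossing A B -> stair_cut A B b -> stair_cut B A b -> False.
Proof.
  intros Hsc CAB CBA.
  destruct (threshold_exists b Hb A HA) as [sa [Ha Ia]].
  destruct (threshold_exists b Hb B HB) as [sb [Hb' Ib]].
  pose proof (proj1 (threshold_spec b Hb B HB sb Hb' Ib sa ltac:(lra)) (CAB sa Ha (proj1 Ia))).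
  pose proof (proj1 (threshold_spec b Hb A HA sa Ha Ia sb ltac:(lra)) (CBA sb Hb' (proj1 Ib))).
  assert (sa = sb) by lra; subst sb.
  apply (stair_neq_top b Hb sa Ha), (single_crossing_indiff A B); assumption.
Qed.

End StairCut.

Definition closed_in_unit (S : R -> Prop) : Prop :=
  forall l, 0 <= l <= 1 ->
  (forall e, 0 < e -> exists l', 0 <= l' <= 1 /\ Rabs (l' - l) < e /\ S l') -> S l.

Lemma unit_interval_connected (S T : R -> Prop) :
  (forall l, 0 <= l <= 1 -> S l \/ T l) ->
  (forall l, 0 <= l <= 1 -> S l -> T l -> False) ->
  closed_in_unit S -> closed_in_unit T -> S 0 -> S 1.
Proof.
  intros Hcov Hdisj CS CT S0.
  set (E := fun x => 0 <= x <= 1 /\ forall y, 0 <= y <= x -> S y).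
  assert (E0 : E 0) by (split; [lra | intros y Hy; replace y with 0 by lra; exact S0]).
  destruct (completeness E) as [m Hm]; [exists 1; intros x [Hx _]; lra | exists 0; exact E0 |].
  assert (Hm0 : 0 <= m) by (apply (proj1 Hm), E0).
  assert (Hm1 : m <= 1) by (apply (proj2 Hm); intros x [Hx _]; lra).
  assert (Hbelow : forall y, 0 <= y < m -> S y).
  { intros y Hy; destruct (is_lub_approx E m Hm (m - y)) as [x [[_ Hx] Hxm]]; [lra |].
    apply Hx; lra. }
  assert (Hupto : forall y, 0 <= y <= m -> S y).
  { intros y Hy; destruct (Req_dec y m) as [-> | Hne]; [| apply Hbelow; lra].
    destruct (Req_dec m 0) as [-> | Hm0']; [exact S0 |].
    apply CS; [lra |]; intros e He.
    exists (Rmax 0 (m - e / 2)); unfold Rmax; destruct Rle_dec;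
      (split; [lra | split; [rewrite Rabs_left1 by lra; lra | apply Hbelow; lra]]). }
  destruct (Req_dec m 1) as [-> | Hne]; [apply Hupto; lra |].
  exfalso; apply (Hdisj m); [lra | apply Hupto; lra |].
  apply CT; [lra |]; intros e He; apply NNPP; intros N.
  set (x := Rmin 1 (m + e / 2)).
  assert (Hx : m < x <= 1 /\ x <= m + e / 2).
  { unfold x; split; [split; [apply Rmin_glb_lt |] | apply Rmin_r]; try lra; apply Rmin_l. }
  assert (Ex : E x).
  { split; [lra |]; intros y Hy.
    destruct (Rle_dec y m); [apply Hupto; lra |].
    destruct (Hcov y) as [Sy | Ty]; [lra | exact Sy |].
    exfalso; apply N; exists y; split; [lra | split; [| exact Ty]].
    rewrite Rabs_pos_eq; lra. }
  pose proof (proj1 Hm x Ex); lra.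
Qed.

Definition box_interp (b0 b1 : box) (l : R) : box :=
  Box (top_pay b0 + l * (top_pay b1 - top_pay b0)) (top_shr b0 + l * (top_shr b1 - top_shr b0))
      (low_pay b0 + l * (low_pay b1 - low_pay b0)) (low_shr b0 + l * (low_shr b1 - low_shr b0)).

Lemma box_interp_0 b0 b1 : box_interp b0 b1 0 = b0.
Proof. destruct b0; unfold box_interp; simpl; f_equal; ring. Qed.

Lemma box_interp_1 b0 b1 : box_interp b0 b1 1 = b1.
Proof. destruct b0, b1; unfold box_interp; simpl; f_equal; ring. Qed.

Lemma stair_pay_interp b0 b1 l s :
  stair_pay (box_interp b0 b1 l) s = stair_pay b0 s + l * (stair_pay b1 s - stair_pay b0 s).
Proof. unfold stair_pay, box_interp; simpl; ring. Qed.

Lemma stair_shr_interp b0 b1 l s :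
  stair_shr (box_interp b0 b1 l) s = stair_shr b0 s + l * (stair_shr b1 s - stair_shr b0 s).
Proof. unfold stair_shr, box_interp; simpl; ring. Qed.

Lemma interp_close a c l l' d M : 0 < M -> 0 <= a <= M -> 0 <= c <= M -> Rabs (l' - l) < d ->
  Rabs (a + l' * (c - a) - (a + l * (c - a))) < d * M.
Proof.
  intros HM Ha Hc Hd.
  replace (a + l' * (c - a) - (a + l * (c - a))) with ((l' - l) * (c - a)) by ring.
  rewrite Rabs_mult.
  assert (Rabs (c - a) <= M) by (unfold Rabs; destruct Rcase_abs; lra).
  pose proof (Rabs_pos (l' - l)); pose proof (Rabs_pos (c - a)); nra.
Qed.

Lemma interp_lt l x0 y0 x1 y1 : 0 <= l <= 1 -> x0 < y0 -> x1 < y1 ->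
  x0 + l * (x1 - x0) < y0 + l * (y1 - y0).
Proof. intros; destruct (Rle_dec l (1 / 2)); nra. Qed.

Section Interpolation.
Variables b0 b1 : box.
Hypothesis H0 : box_ok b0.
Hypothesis H1 : box_ok b1.

Lemma box_ok_interp l : 0 <= l <= 1 -> box_ok (box_interp b0 b1 l).
Proof.
  destruct H0 as [[? ?] [[? ?] ?]], H1 as [[? ?] [[? ?] ?]]; intros Hl.
  unfold box_ok, box_interp; simpl; repeat split;
    first [ apply interp_lt; lra | nra ].
Qed.

Definition interp_modulus : R := 1 + top_pay b0 + top_pay b1.

Lemma interp_modulus_pos : 0 < interp_modulus.
Proof. destruct H0, H1; unfold interp_modulus; lra. Qed.

Lemma interp_near l l' s d : 0 <= l <= 1 -> 0 <= l' <= 1 -> -1 <= s <= 1 -> Rabs (l' - l) < d ->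
  near (stair (box_interp b0 b1 l') s) (stair (box_interp b0 b1 l) s) (d * interp_modulus) /\
  near (top (box_interp b0 b1 l')) (top (box_interp b0 b1 l)) (d * interp_modulus).
Proof.
  intros Hl Hl' Hs Hd.
  pose proof (box_ok_interp l Hl); pose proof (box_ok_interp l' Hl').
  pose proof (stair_pay_bounds b0 H0 s Hs); pose proof (stair_pay_bounds b1 H1 s Hs).
  pose proof (stair_shr_bounds b0 H0 s Hs); pose proof (stair_shr_bounds b1 H1 s Hs).
  pose proof interp_modulus_pos.
  unfold near; rewrite !pay_stair, !shr_stair, !pay_top, !shr_top by (assumption || lra).
  rewrite !stair_pay_interp, !stair_shr_interp; simpl.
  destruct H0 as [[? ?] [[? ?] ?]], H1 as [[? ?] [[? ?] ?]]; unfold interp_modulus in *.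
  repeat split; apply interp_close; lra.
Qed.

End Interpolation.

Section CutClosed.
Variables R1 R2 : Pref.
Hypothesis HR1 : classical R1.
Hypothesis HR2 : classical R2.

Lemma stair_cut_violation b s : box_ok b -> -1 < s < 1 ->
  R2 (stair b s) (top b) -> ~ R1 (stair b s) (top b) ->
  exists s', -1 < s' < 1 /\ strictP R2 (stair b s') (top b) /\ strictP R1 (top b) (stair b s').
Proof.
  intros Hb Hs H2 N1.
  assert (S1 : strictP R1 (top b) (stair b s)) by (split; [apply (pref_not R1 HR1) |]; exact N1).
  destruct (strict_near R1 HR1 _ _ S1) as [e [He Ne]].
  pose proof (stair_modulus_pos b Hb) as HK.
  set (d := Rmin (e / (2 * stair_modulus b)) ((1 - s) / 2)).
  assert (Hd : 0 < d <= e / (2 * stair_modulus b) /\ d <= (1 - s) / 2).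
  { unfold d; split; [split; [apply Rmin_glb_lt; [apply Rdiv_lt_0_compat |] | apply Rmin_l] |
      apply Rmin_r]; lra. }
  assert (Hek : e / (2 * stair_modulus b) < e / stair_modulus b).
  { apply Rmult_lt_compat_l; [lra |]; apply Rinv_lt_contravar; nra. }
  exists (s + d); split; [lra | split].
  - apply (strict_weak_trans R2 HR2 _ (stair b s)); [| exact H2].
    apply (stair_strict_mono b Hb R2 HR2); lra.
  - apply Ne; [apply near_refl; exact He |].
    replace e with (e / stair_modulus b * stair_modulus b) by (field; lra).
    apply (stair_near b Hb); [lra | lra |].
    replace (s + d - s) with d by ring; rewrite Rabs_pos_eq; lra.
Qed.

Lemma stair_cut_closed b0 b1 : box_ok b0 -> box_ok b1 ->
  closed_in_unit (fun l => stair_cut R2 R1 (box_interp b0 b1 l)).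
Proof.
  intros H0 H1 l Hl Happ s Hs H2s; apply NNPP; intros N1.
  destruct (stair_cut_violation _ s (box_ok_interp b0 b1 H0 H1 l Hl) Hs H2s N1)
    as [s' [Hs' [S2 S1]]].
  destruct (strict_near R2 HR2 _ _ S2) as [e2 [He2 E2]].
  destruct (strict_near R1 HR1 _ _ S1) as [e1 [He1 E1]].
  set (e := Rmin e1 e2).
  assert (He : 0 < e <= e1 /\ e <= e2).
  { unfold e; split; [split; [apply Rmin_glb_lt; assumption | apply Rmin_l] | apply Rmin_r]. }
  pose proof (interp_modulus_pos b0 b1 H0 H1) as HM.
  destruct (Happ (e / interp_modulus b0 b1)) as [l' [Hl' [Hll C]]].
  { apply Rdiv_lt_0_compat; lra. }
  destruct (interp_near b0 b1 H0 H1 l l' s' (e / interp_modulus b0 b1)) as [Ns Nt]; try lra.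
  replace (e / interp_modulus b0 b1 * interp_modulus b0 b1) with e in Ns, Nt by (field; lra).
  apply (proj2 (E1 _ _ (near_le _ _ e e1 Nt ltac:(lra)) (near_le _ _ e e1 Ns ltac:(lra)))).
  apply C; [exact Hs' |].
  exact (proj1 (E2 _ _ (near_le _ _ e e2 Ns ltac:(lra)) (near_le _ _ e e2 Nt ltac:(lra)))).
Qed.

End CutClosed.

(* The segment of boxes from b0 to b1 is connected, and along it the two exclusive cut
   directions are closed alternatives. *)
Lemma stair_cut_transfer R1 R2 b0 b1 : classical R1 -> classical R2 -> single_crossing R1 R2 ->
  box_ok b0 -> box_ok b1 -> stair_cut R2 R1 b0 -> stair_cut R2 R1 b1.
Proof.
  intros HR1 HR2 Hsc H0 H1 C0; rewrite <- (box_interp_1 b0 b1).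
  apply (unit_interval_connected (fun l => stair_cut R2 R1 (box_interp b0 b1 l))
           (fun l => stair_cut R1 R2 (box_interp b0 b1 l))).
  - intros l Hl; apply (stair_cut_total R2 R1 HR2 HR1), box_ok_interp; assumption.
  - intros l Hl C C'; apply (stair_cut_exclusive R1 R2 HR1 HR2 _ (box_ok_interp b0 b1 H0 H1 l Hl));
      assumption.
  - apply stair_cut_closed; assumption.
  - apply stair_cut_closed; assumption.
  - rewrite box_interp_0; exact C0.
Qed.

Definition corner_box (x z : Zt) : box := Box (pay z) (shr z) (pay x) (shr x).

Section CornerBox.
Variables x z : Zt.
Hypothesis Hxz : zlt x z.

Lemma corner_box_ok : box_ok (corner_box x z).
Proof. destruct Hxz, (Zt_bounds x), (Zt_bounds z); unfold box_ok; simpl; lra. Qed.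

Lemma stair_corner_box : stair (corner_box x z) 0 = x.
Proof.
  pose proof corner_box_ok as Hb.
  apply Zt_ext; rewrite ?pay_stair, ?shr_stair by (assumption || lra);
    unfold stair_pay, stair_shr; simpl; rewrite ?Ropp_0, Rmax_left by lra; ring.
Qed.

Lemma top_corner_box : top (corner_box x z) = z.
Proof.
  pose proof corner_box_ok as Hb.
  apply Zt_ext; rewrite ?pay_top, ?shr_top by assumption; reflexivity.
Qed.

End CornerBox.

Definition ref_box : box := Box 1 (1 / 2) 0 0.

Lemma ref_box_ok : box_ok ref_box.
Proof. unfold box_ok; simpl; lra. Qed.

Definition rank (Rl : Pref) : R :=
  epsilon (inhabits 0) (fun s => -1 < s < 1 /\ indiff Rl (stair ref_box s) (top ref_box)).

Section Rank.
Variable D : Domain.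
Hypothesis HD : rich_single_crossing D.

Lemma domain_classical Rl : D Rl -> classical Rl.
Proof. destruct HD as [H _]; auto. Qed.

Lemma domain_single_crossing R1 R2 : D R1 -> D R2 -> R1 <> R2 -> single_crossing R1 R2.
Proof. destruct HD as [_ [H _]]; auto. Qed.

Lemma rank_spec Rl : D Rl ->
  -1 < rank Rl < 1 /\ indiff Rl (stair ref_box (rank Rl)) (top ref_box).
Proof.
  intros H; unfold rank; apply epsilon_spec, (threshold_exists ref_box ref_box_ok Rl (domain_classical Rl H)).
Qed.

Lemma rank_le_iff Rl s : D Rl -> -1 <= s <= 1 ->
  (Rl (stair ref_box s) (top ref_box) <-> rank Rl <= s).
Proof.
  intros H; destruct (rank_spec Rl H) as [Hr Ir].
  exact (threshold_spec ref_box ref_box_ok Rl (domain_classical Rl H) (rank Rl) Hr Ir s).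
Qed.

Lemma rank_inj R1 R2 : D R1 -> D R2 -> rank R1 = rank R2 -> R1 = R2.
Proof.
  intros H1 H2 E; apply NNPP; intros N.
  destruct (rank_spec R1 H1) as [Hr1 I1], (rank_spec R2 H2) as [_ I2].
  rewrite <- E in I2.
  apply (stair_neq_top ref_box ref_box_ok (rank R1) Hr1).
  apply (single_crossing_indiff R1 R2); auto using domain_classical, domain_single_crossing.
Qed.

Lemma rank_onto y : -1 < y < 1 -> exists Rl, D Rl /\ rank Rl = y.
Proof.
  intros Hy; destruct HD as [_ [_ Hrich]].
  destruct (Hrich _ _ (stair_below_top ref_box ref_box_ok y Hy)) as [Rl [HRl I]].
  exists Rl; split; [exact HRl |].
  destruct (rank_spec Rl HRl) as [Hr Ir].
  exact (threshold_unique ref_box ref_box_ok Rl (domain_classical Rl HRl) _ _ Hr Hy Ir I).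
Qed.

Lemma prec_rank_lt R1 R2 : D R1 -> D R2 -> prec R1 R2 -> rank R1 < rank R2.
Proof.
  intros H1 H2 [Hne Hcut].
  destruct (rank_spec R2 H2) as [Hr2 [I2 _]].
  assert (rank R1 <= rank R2).
  { apply (rank_le_iff R1); [exact H1 | lra |].
    apply Hcut; [right; apply stair_below_top; [exact ref_box_ok | exact Hr2] | exact I2]. }
  destruct (Req_dec (rank R1) (rank R2)) as [E | ]; [| lra].
  exfalso; apply Hne, rank_inj; assumption.
Qed.

(* Comparing ranks is a cut along the reference staircase; the cut transfers to the
   corner box spanned by any x < z, whose staircase passes through x. *)
Lemma rank_lt_prec R1 R2 : D R1 -> D R2 -> rank R1 < rank R2 -> prec R1 R2.
Proof.
  intros H1 H2 Hlt; split; [intros E; subst; lra |].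
  assert (Cref : stair_cut R2 R1 ref_box).
  { intros s Hs Hr; apply (rank_le_iff R1); [exact H1 | lra |].
    apply (rank_le_iff R2) in Hr; [lra | exact H2 | lra]. }
  intros z x [-> | Hxz] Hx; [apply (pref_refl R1), domain_classical, H1 |].
  assert (Hne : R1 <> R2) by (intros E; subst; lra).
  pose proof (stair_cut_transfer R1 R2 ref_box (corner_box x z)
    (domain_classical R1 H1) (domain_classical R2 H2) (domain_single_crossing R1 R2 H1 H2 Hne)
    ref_box_ok (corner_box_ok x z Hxz) Cref 0 ltac:(lra)) as Hcut.
  unfold UC in *; rewrite stair_corner_box, top_corner_box in Hcut by exact Hxz.
  exact (Hcut Hx).
Qed.

Lemma prec_iff_rank_lt R1 R2 : D R1 -> D R2 -> (prec R1 R2 <-> rank R1 < rank R2).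
Proof. intros H1 H2; split; [apply prec_rank_lt | apply rank_lt_prec]; assumption. Qed.

Lemma preceq_iff_rank_le R1 R2 : D R1 -> D R2 -> (preceq R1 R2 <-> rank R1 <= rank R2).
Proof.
  intros H1 H2; split.
  - intros [-> | P]; [lra |]; apply Rlt_le, prec_rank_lt; assumption.
  - intros L; destruct (Req_dec (rank R1) (rank R2)) as [E | Ne].
    + left; apply rank_inj; assumption.
    + right; apply rank_lt_prec; auto; lra.
Qed.

Lemma basic_open_rank_ball B Rl : basic_open D B -> B Rl ->
  exists e, 0 < e /\ forall Q, D Q -> Rabs (rank Q - rank Rl) < e -> B Q.
Proof.
  intros HB BR.
  destruct HB as [-> | [[a [c [Ha [Hc ->]]]] | [[a [Ha ->]] | [c [Hc ->]]]]].
  - exists 1; split; [lra | auto].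
  - destruct BR as [DR [Pa Pc]].
    apply prec_rank_lt in Pa; auto; apply prec_rank_lt in Pc; auto.
    exists (Rmin (rank Rl - rank a) (rank c - rank Rl)); split; [apply Rmin_glb_lt; lra |].
    pose proof (Rmin_l (rank Rl - rank a) (rank c - rank Rl)).
    pose proof (Rmin_r (rank Rl - rank a) (rank c - rank Rl)).
    intros Q DQ Hd; split; [exact DQ |];
      split; apply rank_lt_prec; auto; unfold Rabs in Hd; destruct Rcase_abs in Hd; lra.
  - destruct BR as [DR Pa]; apply prec_rank_lt in Pa; auto.
    exists (rank Rl - rank a); split; [lra |].
    intros Q DQ Hd; split; [exact DQ |];
      apply rank_lt_prec; auto; unfold Rabs in Hd; destruct Rcase_abs in Hd; lra.
  - destruct BR as [DR Pc]; apply prec_rank_lt in Pc; auto.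
    exists (rank c - rank Rl); split; [lra |].
    intros Q DQ Hd; split; [exact DQ |];
      apply rank_lt_prec; auto; unfold Rabs in Hd; destruct Rcase_abs in Hd; lra.
Qed.

Lemma rank_ball_interval Rl e : D Rl -> 0 < e -> exists B, basic_open D B /\ B Rl /\
  forall Q, B Q -> D Q /\ Rabs (rank Q - rank Rl) < e.
Proof.
  intros DR He; destruct (rank_spec Rl DR) as [Hr _].
  set (d := Rmin e (Rmin (rank Rl + 1) (1 - rank Rl)) / 2).
  assert (Hd : 0 < d /\ d < e /\ d < rank Rl + 1 /\ d < 1 - rank Rl).
  { pose proof (Rmin_l e (Rmin (rank Rl + 1) (1 - rank Rl))).
    pose proof (Rmin_r e (Rmin (rank Rl + 1) (1 - rank Rl))).
    pose proof (Rmin_l (rank Rl + 1) (1 - rank Rl)); pose proof (Rmin_r (rank Rl + 1) (1 - rank Rl)).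
    assert (0 < Rmin e (Rmin (rank Rl + 1) (1 - rank Rl)))
      by (apply Rmin_glb_lt; [| apply Rmin_glb_lt]; lra).
    unfold d; lra. }
  destruct (rank_onto (rank Rl - d)) as [a [Da Ea]]; [lra |].
  destruct (rank_onto (rank Rl + d)) as [c [Dc Ec]]; [lra |].
  exists (fun Q => D Q /\ prec a Q /\ prec Q c); split; [| split].
  - right; left; exists a, c; auto.
  - split; [exact DR |]; split; apply rank_lt_prec; auto; lra.
  - intros Q [DQ [Pa Pc]]; apply prec_rank_lt in Pa; auto; apply prec_rank_lt in Pc; auto.
    split; [exact DQ |]; unfold Rabs; destruct Rcase_abs; lra.
Qed.

Lemma order_open_iff_rank_balls U : (forall Rl, U Rl -> D Rl) ->
  (order_open D U <->
   forall Rl, U Rl -> exists e, 0 < e /\ forall Q, D Q -> Rabs (rank Q - rank Rl) < e -> U Q).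
Proof.
  intros HU; split.
  - intros [_ Ho] Rl UR; destruct (Ho Rl UR) as [B [HB [BR BU]]].
    destruct (basic_open_rank_ball B Rl HB BR) as [e [He HBe]].
    exists e; split; [exact He | auto].
  - intros Hball; split; [exact HU |]; intros Rl UR.
    destruct (Hball Rl UR) as [e [He HUe]].
    destruct (rank_ball_interval Rl e (HU Rl UR) He) as [B [HB [BR BU]]].
    exists B; split; [exact HB | split; [exact BR |]].
    intros Q BQ; destruct (BU Q BQ); auto.
Qed.

Lemma rank_linear_continuum : linear_continuum D.
Proof.
  split; [split; [| split] | split].
  - intros Rl _ [N _]; apply N; reflexivity.
  - intros R1 R2 R3 H1 H2 H3 P1 P2; apply rank_lt_prec; auto.
    apply prec_rank_lt in P1; auto; apply prec_rank_lt in P2; auto; lra.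
  - intros R1 R2 H1 H2 N.
    destruct (Rtotal_order (rank R1) (rank R2)) as [L | [E | G]].
    + left; apply rank_lt_prec; auto.
    + exfalso; apply N, rank_inj; auto.
    + right; apply rank_lt_prec; auto.
  - intros S HS [s0 Ss0] [u [Du Hu]].
    set (E := fun y => exists s, S s /\ rank s = y).
    assert (Hbound : forall u', upper_bound D S u' -> is_upper_bound E (rank u')).
    { intros u' [Du' Hu'] y [s [Ss <-]]; apply (preceq_iff_rank_le s u'); auto. }
    destruct (completeness E) as [m [Hm1 Hm2]];
      [exists (rank u); apply Hbound; split; auto | exists (rank s0), s0; auto |].
    assert (rank s0 <= m <= rank u)
      by (split; [apply Hm1; exists s0; auto | apply Hm2, Hbound; split; auto]).
    pose proof (rank_spec s0 (HS s0 Ss0)); pose proof (rank_spec u Du).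
    destruct (rank_onto m) as [l [Dl El]]; [lra |].
    exists l; split.
    + split; [exact Dl |]; intros s Ss; apply preceq_iff_rank_le; auto.
      rewrite El; apply Hm1; exists s; auto.
    + intros u' Hu'; apply preceq_iff_rank_le; auto; [apply Hu' |].
      rewrite El; apply Hm2, Hbound, Hu'.
  - intros R1 R2 H1 H2 P; apply prec_rank_lt in P; auto.
    pose proof (rank_spec R1 H1); pose proof (rank_spec R2 H2).
    destruct (rank_onto ((rank R1 + rank R2) / 2)) as [Rl [Dl El]]; [lra |].
    exists Rl; split; [exact Dl |]; split; apply rank_lt_prec; auto; lra.
Qed.

Lemma in_interval_pm1 y : in_interval (Finite (-1)) (Finite 1) y <-> -1 < y < 1.
Proof. unfold in_interval; simpl; tauto. Qed.

Lemma rank_order_homeomorphism : order_homeomorphism D rank (Finite (-1)) (Finite 1).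
Proof.
  split; [| split; [| split; [| split; [| split]]]].
  - intros Rl H; apply in_interval_pm1, rank_spec, H.
  - apply rank_inj.
  - intros y Hy; apply in_interval_pm1 in Hy; apply rank_onto, Hy.
  - apply prec_rank_lt.
  - intros V [_ HV]; apply order_open_iff_rank_balls; [intros Rl [H _]; exact H |].
    intros Rl [DR VR]; destruct (HV _ VR) as [e [He HVe]].
    exists e; split; [exact He |]; intros Q DQ Hd; split; [exact DQ |].
    apply HVe; [apply in_interval_pm1, rank_spec, DQ | exact Hd].
  - intros U HU; assert (HUD : forall Rl, U Rl -> D Rl) by apply HU.
    pose proof (proj1 (order_open_iff_rank_balls U HUD) HU) as Hball; split.
    + intros y [Rl [UR <-]]; apply in_interval_pm1, rank_spec, HUD, UR.
    + intros y [Rl [UR <-]]; destruct (Hball Rl UR) as [e [He HUe]].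
      exists e; split; [exact He |]; intros y' Hy' Hd; apply in_interval_pm1 in Hy'.
      destruct (rank_onto y' Hy') as [Q [DQ EQ]].
      exists Q; split; [apply HUe; [exact DQ | rewrite EQ; exact Hd] | exact EQ].
Qed.

Lemma rank_metrizable : order_topology_metrizable D.
Proof.
  exists (fun R1 R2 => Rabs (rank R1 - rank R2)); split; [split; [| split; [| split]] |].
  - intros; apply Rabs_pos.
  - intros R1 R2 H1 H2; split.
    + intros E0; apply rank_inj; auto; unfold Rabs in E0; destruct Rcase_abs in E0; lra.
    + intros ->; rewrite Rminus_diag, Rabs_R0; reflexivity.
  - intros; apply Rabs_minus_sym.
  - intros R1 R2 R3 _ _ _.
    replace (rank R1 - rank R3) with ((rank R1 - rank R2) + (rank R2 - rank R3)) by ring.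
    apply Rabs_triang.
  - intros U; split.
    + intros HU; assert (HUD : forall Rl, U Rl -> D Rl) by apply HU.
      split; [exact HUD |]; intros Rl UR.
      destruct (proj1 (order_open_iff_rank_balls U HUD) HU Rl UR) as [e [He HUe]].
      exists e; split; [exact He |]; intros Q DQ Hd; apply HUe; [exact DQ |].
      rewrite Rabs_minus_sym; exact Hd.
    + intros [HUD Hm]; apply order_open_iff_rank_balls; [exact HUD |]; intros Rl UR.
      destruct (Hm Rl UR) as [e [He HUe]].
      exists e; split; [exact He |]; intros Q DQ Hd; apply HUe; [exact DQ |].
      rewrite Rabs_minus_sym; exact Hd.
Qed.

End Rank.

Theorem theorem1 (D : Domain) (HD : rich_single_crossing D) :
  linear_continuum D /\
  (exists (h : Pref -> R) (a b : Rbar), Rbar_lt a b /\ order_homeomorphism D h a b) /\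
  order_topology_metrizable D.
Proof.
  split; [exact (rank_linear_continuum D HD) |]; split; [| exact (rank_metrizable D HD)].
  exists rank, (Finite (-1)), (Finite 1); split; [simpl; lra |].
  exact (rank_order_homeomorphism D HD).
Qed.
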